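(* Let $G_1$ and $G_2$ be bow-free acyclic mixed graphs on the same node set $V$ with the same skeleton, such that for every path $(v_1,v_2,v_3)$ in the skeleton through three distinct nodes, $(v_1,v_2,v_3)$ is a collider in $G_1$ if and only if it is a collider in $G_2$. Then $G_1$ and $G_2$ are algebraically equivalent.
   Context: A mixed graph $G=(V,D,B)$ has directed edges $D$ and bidirected edges $B$; it is acyclic if it has no directed cycle, and bow-free if no pair of nodes is joined by both a directed and a bidirected edge. The skeleton of $G$ is the undirected graph on $V$ with an edge between two nodes iff they are joined by some edge of $G$. In a bow-free graph, a path $(v_1,v_2,v_3)$ through three distinct nodes along skeleton edges is a collider if both edges of $G$ on it have an arrowhead at $v_2$ (i.e. each is either bidirected or directed into $v_2$). The model of $G$ is $\mathcal M(G)=\{(I-\Lambda)^{-T}\Omega(I-\Lambda)^{-1}\}$ over real $\Lambda$ supported on $D$ with $I-\Lambda$ invertible and positive definite $\Omega$ with off-diagonal support in $B$. Two graphs are algebraically equivalent if their models have the same Zariski closure. *)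

(* real numbers are Stdlib's R. Nodes are 0..n-1 (nat < n);
   matrices are functions nat -> nat -> R, only entries with indices < n matter. *)
From Stdlib Require Import Reals Relations.
Open Scope R_scope.

Fixpoint rsum (k : nat) (f : nat -> R) : R :=
  match k with O => 0 | S k' => rsum k' f + f k' end.

Definition mat := nat -> nat -> R.
Definition idm (i j : nat) : R := if Nat.eqb i j then 1 else 0.

Record mixed_graph := MixedGraph {
  dir : nat -> nat -> Prop;
  bidir : nat -> nat -> Prop
}.

Definition wf_graph (n : nat) (G : mixed_graph) : Prop :=
  (forall i j, dir G i j -> (i < n)%nat /\ (j < n)%nat /\ i <> j) /\
  (forall i j, bidir G i j -> (i < n)%nat /\ (j < n)%nat /\ i <> j) /\
  (forall i j, bidir G i j -> bidir G j i).

Definition acyclic (G : mixed_graph) : Prop :=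
  forall i, ~ clos_trans nat (dir G) i i.

Definition bow_free (G : mixed_graph) : Prop :=
  forall i j, (dir G i j \/ dir G j i) -> ~ bidir G i j.

Definition skel (G : mixed_graph) (i j : nat) : Prop :=
  dir G i j \/ dir G j i \/ bidir G i j.

Definition arrowhead_at (G : mixed_graph) (u v : nat) : Prop :=
  dir G u v \/ bidir G u v.

Definition skel_path3 (n : nat) (G : mixed_graph) (v1 v2 v3 : nat) : Prop :=
  (v1 < n)%nat /\ (v2 < n)%nat /\ (v3 < n)%nat /\
  v1 <> v2 /\ v2 <> v3 /\ v1 <> v3 /\ skel G v1 v2 /\ skel G v2 v3.

Definition collider (n : nat) (G : mixed_graph) (v1 v2 v3 : nat) : Prop :=
  skel_path3 n G v1 v2 v3 /\ arrowhead_at G v1 v2 /\ arrowhead_at G v3 v2.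

Definition pos_def (n : nat) (W : mat) : Prop :=
  (forall i j, (i < n)%nat -> (j < n)%nat -> W i j = W j i) /\
  (forall v : nat -> R, (exists i, (i < n)%nat /\ v i <> 0) ->
     0 < rsum n (fun i => rsum n (fun j => v i * W i j * v j))).

(* M(G) = { (I - L)^{-T} W (I - L)^{-1} } *)
Definition in_model (n : nat) (G : mixed_graph) (S : mat) : Prop :=
  exists (L W Minv : mat),
    (forall i j, (i < n)%nat -> (j < n)%nat -> ~ dir G i j -> L i j = 0) /\
    (forall i j, (i < n)%nat -> (j < n)%nat ->
        rsum n (fun k => Minv i k * (idm k j - L k j)) = idm i j) /\
    (forall i j, (i < n)%nat -> (j < n)%nat ->
        rsum n (fun k => (idm i k - L i k) * Minv k j) = idm i j) /\
    pos_def n W /\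
    (forall i j, (i < n)%nat -> (j < n)%nat -> i <> j -> ~ bidir G i j -> W i j = 0) /\
    (forall i j, (i < n)%nat -> (j < n)%nat ->
        S i j = rsum n (fun k => rsum n (fun l => Minv k i * W k l * Minv l j))).

Inductive rpoly : Type :=
| PConst : R -> rpoly
| PVar : nat -> nat -> rpoly
| PAdd : rpoly -> rpoly -> rpoly
| PMul : rpoly -> rpoly -> rpoly.

(* evaluation at an n x n matrix; variables outside the range evaluate to 0 *)
Fixpoint peval (n : nat) (p : rpoly) (S : mat) : R :=
  match p with
  | PConst c => c
  | PVar i j => if andb (Nat.ltb i n) (Nat.ltb j n) then S i j else 0
  | PAdd p q => peval n p S + peval n q S
  | PMul p q => peval n p S * peval n q S
  end.

Definition zariski_closure (n : nat) (A : mat -> Prop) (S : mat) : Prop :=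
  forall p : rpoly, (forall T, A T -> peval n p T = 0) -> peval n p S = 0.

Definition alg_equivalent (n : nat) (G1 G2 : mixed_graph) : Prop :=
  forall S, zariski_closure n (in_model n G1) S <-> zariski_closure n (in_model n G2) S.

From Stdlib Require Import Reals Relations Wf_nat Lra Lia Psatz Classical ClassicalEpsilon.

(* In fact M(G1) = M(G2).  The covariance (I - L)^{-T} W (I - L)^{-1} does not change
   under (L, W) |-> (L', P^T W P) with I - L' = (I - L) P, so M(G) is contained in M(G')
   whenever an invertible P acting on two adjacent nodes u, x moves the supports of G into
   those of G'.  Three local moves admit such a P: u -> x becomes u <-> x when no
   arrowhead enters u; u <-> x becomes u -> x when x is the only node with an arrowhead
   into u; and u -> x is reversed when no arrowhead enters u and only u's enters x.
   Collider agreement implies that a node with two arrowheads has the same ones in both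
   graphs, so following a mismatched arrowhead of G1 backwards along directed edges
   reaches a place where one of the moves removes a mismatch without changing skeleton
   or colliders.  Induction on the number of mismatches shows that M(G1) is contained
   in M(G2), and symmetrically. *)

Lemma rsum_ext n f g : (forall k, (k < n)%nat -> f k = g k) -> rsum n f = rsum n g.
Proof.
  induction n as [|n IH]; intros H; simpl; auto.
  rewrite IH by (intros; apply H; lia). rewrite H by lia. reflexivity.
Qed.

Lemma rsum_add n f g : rsum n (fun k => f k + g k) = rsum n f + rsum n g.
Proof. induction n as [|n IH]; simpl; [lra|]. rewrite IH; lra. Qed.

Lemma rsum_mul_l n c f : c * rsum n f = rsum n (fun k => c * f k).
Proof. induction n as [|n IH]; simpl; [lra|]. rewrite <- IH; lra. Qed.

Lemma rsum_mul_r n c f : rsum n f * c = rsum n (fun k => f k * c).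
Proof. induction n as [|n IH]; simpl; [lra|]. rewrite <- IH; lra. Qed.

Lemma rsum_swap n m (f : nat -> nat -> R) :
  rsum n (fun i => rsum m (fun j => f i j)) = rsum m (fun j => rsum n (fun i => f i j)).
Proof.
  induction n as [|n IH]; simpl.
  - induction m as [|m IHm]; simpl; auto. rewrite <- IHm; lra.
  - rewrite IH, <- rsum_add. auto.
Qed.

Lemma rsum_eq0 n f : (forall k, (k < n)%nat -> f k = 0) -> rsum n f = 0.
Proof.
  intros H. rewrite (rsum_ext n f (fun _ => 0)) by auto.
  clear H. induction n; simpl; lra.
Qed.

Lemma idm_sym i j : idm i j = idm j i.
Proof. unfold idm. destruct (Nat.eqb_spec i j), (Nat.eqb_spec j i); congruence. Qed.

Lemma idm_eq i : idm i i = 1.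
Proof. unfold idm. now rewrite Nat.eqb_refl. Qed.

Lemma idm_neq i j : i <> j -> idm i j = 0.
Proof. intros. unfold idm. now destruct (Nat.eqb_spec i j). Qed.

Lemma rsum_idm_l n i f : (i < n)%nat -> rsum n (fun k => idm i k * f k) = f i.
Proof.
  induction n as [|n IH]; intros Hi; [lia|]. simpl.
  destruct (Nat.eq_dec i n) as [->|Hin].
  - rewrite rsum_eq0, idm_eq; [lra|]. intros k Hk. rewrite idm_neq by lia. lra.
  - rewrite IH, idm_neq by lia. lra.
Qed.

Lemma rsum_idm_r n i f : (i < n)%nat -> rsum n (fun k => f k * idm k i) = f i.
Proof.
  intros Hi. rewrite <- (rsum_idm_l n i f Hi). apply rsum_ext. intros. rewrite idm_sym. lra.
Qed.

Definition mxmul (n : nat) (A B : mat) : mat := fun i j => rsum n (fun k => A i k * B k j).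
Definition trmx (A : mat) : mat := fun i j => A j i.
Definition quad (n : nat) (A W B : mat) : mat :=
  fun i j => rsum n (fun k => rsum n (fun l => A k i * W k l * B l j)).
Definition ImL (L : mat) : mat := fun i j => idm i j - L i j.

Definition mx_inverses (n : nat) (P Q : mat) : Prop :=
  forall i j, (i < n)%nat -> (j < n)%nat -> mxmul n P Q i j = idm i j /\ mxmul n Q P i j = idm i j.

Lemma mxmul_ext n A A' B B' i j :
  (forall k, (k < n)%nat -> A i k = A' i k) -> (forall k, (k < n)%nat -> B k j = B' k j) ->
  mxmul n A B i j = mxmul n A' B' i j.
Proof. intros HA HB. apply rsum_ext. intros k Hk. now rewrite HA, HB. Qed.

Lemma mxmulA n A B C i j : mxmul n (mxmul n A B) C i j = mxmul n A (mxmul n B C) i j.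
Proof.
  unfold mxmul.
  transitivity (rsum n (fun k => rsum n (fun m => A i m * B m k * C k j))).
  - apply rsum_ext. intros. apply rsum_mul_r.
  - rewrite rsum_swap. apply rsum_ext. intros. rewrite rsum_mul_l.
    apply rsum_ext. intros. lra.
Qed.

Lemma mxmul1l n B i j : (i < n)%nat -> mxmul n idm B i j = B i j.
Proof. intros. apply (rsum_idm_l n i (fun k => B k j)); auto. Qed.

Lemma mxmul1r n A i j : (j < n)%nat -> mxmul n A idm i j = A i j.
Proof. intros. apply (rsum_idm_r n j (fun k => A i k)); auto. Qed.

Lemma mx_inverses_sym n P Q : mx_inverses n P Q -> mx_inverses n Q P.
Proof. intros H i j Hi Hj. specialize (H i j Hi Hj). tauto. Qed.

Lemma mx_inverses_mul n A A' B B' :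
  mx_inverses n A A' -> mx_inverses n B B' -> mx_inverses n (mxmul n A B) (mxmul n B' A').
Proof.
  intros HA HB.
  assert (Hcancel : forall X Y X' Y' i j, (i < n)%nat -> (j < n)%nat ->
            mx_inverses n X X' -> mx_inverses n Y Y' ->
            mxmul n (mxmul n X Y) (mxmul n Y' X') i j = idm i j).
  { intros X Y X' Y' i j Hi Hj HX HY. rewrite mxmulA.
    transitivity (mxmul n X X' i j); [|apply HX; auto].
    apply mxmul_ext; [auto|]. intros k Hk. rewrite <- mxmulA.
    transitivity (mxmul n idm X' k j); [|apply mxmul1l; auto].
    apply mxmul_ext; [|auto]. intros l Hl. apply HY; auto. }
  intros i j Hi Hj. split; apply Hcancel; auto using mx_inverses_sym.
Qed.

Lemma quadE n A W B i j : quad n A W B i j = mxmul n (trmx A) (mxmul n W B) i j.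
Proof.
  unfold quad, mxmul, trmx. apply rsum_ext. intros. rewrite rsum_mul_l.
  apply rsum_ext. intros. lra.
Qed.

Lemma quad_ext n A A' W W' B B' i j :
  (forall k, (k < n)%nat -> A k i = A' k i) ->
  (forall k l, (k < n)%nat -> (l < n)%nat -> W k l = W' k l) ->
  (forall l, (l < n)%nat -> B l j = B' l j) ->
  quad n A W B i j = quad n A' W' B' i j.
Proof.
  intros HA HW HB. apply rsum_ext. intros. apply rsum_ext. intros.
  now rewrite HA, HW, HB.
Qed.

Lemma quad_mxmul n X Y W X' Y' i j :
  quad n (mxmul n X Y) W (mxmul n X' Y') i j = quad n Y (quad n X W X') Y' i j.
Proof.
  rewrite !quadE.
  transitivity (mxmul n (mxmul n (trmx Y) (trmx X)) (mxmul n (mxmul n W X') Y') i j).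
  - apply mxmul_ext; intros k Hk.
    + unfold trmx, mxmul. apply rsum_ext. intros. lra.
    + symmetry. apply mxmulA.
  - rewrite mxmulA. apply mxmul_ext; [auto|]. intros k Hk.
    rewrite <- mxmulA. apply mxmul_ext; [|auto]. intros. now rewrite quadE.
Qed.

Lemma quad1 n W i j : (i < n)%nat -> (j < n)%nat -> quad n idm W idm i j = W i j.
Proof.
  intros Hi Hj. rewrite quadE.
  transitivity (mxmul n idm (mxmul n W idm) i j).
  - apply mxmul_ext; [|auto]. intros. apply idm_sym.
  - now rewrite mxmul1l, mxmul1r.
Qed.

Lemma pos_def_congruence n W P Q :
  pos_def n W -> mx_inverses n P Q -> pos_def n (quad n P W P).
Proof.
  intros [Wsym Wpos] HPQ. split.
  - intros i j Hi Hj. unfold quad. rewrite rsum_swap.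
    apply rsum_ext. intros. apply rsum_ext. intros. rewrite Wsym by auto. lra.
  - intros v [i0 [Hi0 Hv0]].
    (* v^T (P^T W P) v = (P v)^T W (P v), and P v <> 0 because Q (P v) = v *)
    set (V := fun (k _ : nat) => v k).
    set (w := fun k => mxmul n P V k 0%nat).
    replace (rsum n (fun i => rsum n (fun j => v i * quad n P W P i j * v j)))
      with (rsum n (fun k => rsum n (fun l => w k * W k l * w l))).
    2:{ transitivity (quad n (mxmul n P V) W (mxmul n P V) 0%nat 0%nat); [reflexivity|].
        rewrite quad_mxmul. reflexivity. }
    apply Wpos. apply NNPP. intros Hw. apply Hv0.
    transitivity (mxmul n (mxmul n Q P) V i0 0%nat).
    + rewrite (mxmul_ext n _ idm V V); [now rewrite mxmul1l| |reflexivity].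
      intros k Hk. apply (HPQ _ _ Hi0 Hk).
    + rewrite mxmulA. apply rsum_eq0. intros k Hk.
      replace (mxmul n P V k 0%nat) with 0; [lra|].
      symmetry. apply NNPP. intros Hk'. apply Hw. now exists k.
Qed.

Lemma mx_inverses_ext n A A' B :
  (forall i j, (i < n)%nat -> (j < n)%nat -> A i j = A' i j) ->
  mx_inverses n A B -> mx_inverses n A' B.
Proof.
  intros HA H i j Hi Hj. destruct (H i j Hi Hj) as [H1 H2]. split.
  - rewrite <- H1. apply mxmul_ext; auto. intros. symmetry. auto.
  - rewrite <- H2. apply mxmul_ext; auto. intros. symmetry. auto.
Qed.

Lemma in_model_congruence n G S L W Minv P Q :
  (forall i j, (i < n)%nat -> (j < n)%nat -> mxmul n Minv (ImL L) i j = idm i j) ->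
  (forall i j, (i < n)%nat -> (j < n)%nat -> mxmul n (ImL L) Minv i j = idm i j) ->
  pos_def n W ->
  (forall i j, (i < n)%nat -> (j < n)%nat -> S i j = quad n Minv W Minv i j) ->
  mx_inverses n P Q ->
  (forall i j, (i < n)%nat -> (j < n)%nat -> ~ dir G i j -> mxmul n (ImL L) P i j = idm i j) ->
  (forall i j, (i < n)%nat -> (j < n)%nat -> i <> j -> ~ bidir G i j -> quad n P W P i j = 0) ->
  in_model n G S.
Proof.
  intros HM1 HM2 HW HS HPQ HL' HW'.
  set (L' := fun i j => idm i j - mxmul n (ImL L) P i j).
  assert (HM' : mx_inverses n (ImL L') (mxmul n Q Minv)).
  { apply (mx_inverses_ext n (mxmul n (ImL L) P)).
    - intros. unfold L', ImL at 2. ring.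
    - apply mx_inverses_mul; auto. intros i j Hi Hj. split; auto. }
  exists L', (quad n P W P), (mxmul n Q Minv).
  split; [|split; [|split; [|split; [|split]]]].
  - intros i j Hi Hj Hd. unfold L'. rewrite HL' by auto. ring.
  - apply HM'.
  - apply HM'.
  - apply pos_def_congruence with Q; auto.
  - auto.
  - intros i j Hi Hj. rewrite HS by auto. symmetry.
    change (quad n (mxmul n Q Minv) (quad n P W P) (mxmul n Q Minv) i j = quad n Minv W Minv i j).
    rewrite quad_mxmul. apply quad_ext; auto. intros k l Hk Hl.
    rewrite <- quad_mxmul, <- (quad1 n W k l) by auto.
    apply quad_ext; auto; intros; apply HPQ; auto.
Qed.

Definition idm_block (u x : nat) (a b c d : R) : mat := fun i j =>
  idm i j + a * idm i u * idm j u + b * idm i u * idm j x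
          + c * idm i x * idm j u + d * idm i x * idm j x.

Lemma rsum_mul_idm_block n u x a b c d g j :
  (u < n)%nat -> (x < n)%nat -> (j < n)%nat ->
  rsum n (fun k => g k * idm_block u x a b c d k j) =
  g j + a * g u * idm j u + b * g u * idm j x + c * g x * idm j u + d * g x * idm j x.
Proof.
  intros Hu Hx Hj. unfold idm_block.
  transitivity (rsum n (fun k => g k * idm k j + (a * idm j u) * (idm u k * g k)
     + (b * idm j x) * (idm u k * g k) + (c * idm j u) * (idm x k * g k)
     + (d * idm j x) * (idm x k * g k))).
  { apply rsum_ext. intros. rewrite (idm_sym k u), (idm_sym k x). ring. }
  rewrite !rsum_add, <- !rsum_mul_l, !rsum_idm_l, rsum_idm_r by auto. ring.
Qed.

Lemma mxmul_idm_block n u x a b c d A i j :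
  (u < n)%nat -> (x < n)%nat -> (j < n)%nat ->
  mxmul n A (idm_block u x a b c d) i j =
  A i j + a * A i u * idm j u + b * A i u * idm j x + c * A i x * idm j u + d * A i x * idm j x.
Proof. intros. apply (rsum_mul_idm_block n u x a b c d (fun k => A i k)); auto. Qed.

Lemma quad_idm_block n u x a b c d W i j :
  (u < n)%nat -> (x < n)%nat -> (i < n)%nat ->
  let WP := mxmul n W (idm_block u x a b c d) in
  quad n (idm_block u x a b c d) W (idm_block u x a b c d) i j =
  WP i j + a * idm i u * WP u j + b * idm i x * WP u j + c * idm i u * WP x j + d * idm i x * WP x j.
Proof.
  intros Hu Hx Hi WP. subst WP. rewrite quadE.
  transitivity (rsum n (fun k => mxmul n W (idm_block u x a b c d) k j * idm_block u x a b c d k i)).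
  - apply rsum_ext. intros. unfold trmx. cbv beta. ring.
  - rewrite rsum_mul_idm_block by auto. ring.
Qed.

Lemma idm_block_inverses n u x a b c d a' b' c' d' :
  (u < n)%nat -> (x < n)%nat -> u <> x ->
  (1 + a) * (1 + a') + b * c' = 1 -> (1 + a) * b' + b * (1 + d') = 0 ->
  c * (1 + a') + (1 + d) * c' = 0 -> c * b' + (1 + d) * (1 + d') = 1 ->
  (1 + a') * (1 + a) + b' * c = 1 -> (1 + a') * b + b' * (1 + d) = 0 ->
  c' * (1 + a) + (1 + d') * c = 0 -> c' * b + (1 + d') * (1 + d) = 1 ->
  mx_inverses n (idm_block u x a b c d) (idm_block u x a' b' c' d').
Proof.
  intros Hu Hx Hux E1 E2 E3 E4 F1 F2 F3 F4 i j Hi Hj.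
  rewrite !mxmul_idm_block by auto.
  unfold idm_block, idm.
  destruct (Nat.eqb_spec i u), (Nat.eqb_spec i x), (Nat.eqb_spec j u), (Nat.eqb_spec j x),
    (Nat.eqb_spec u x), (Nat.eqb_spec x u), (Nat.eqb_spec u u), (Nat.eqb_spec x x), (Nat.eqb_spec i j);
    subst; try congruence; split; lra.
Qed.

Definition bow_free_acyclic (n : nat) (G : mixed_graph) : Prop :=
  wf_graph n G /\ acyclic G /\ bow_free G.

Lemma arrowhead_at_range n G a b :
  wf_graph n G -> arrowhead_at G a b -> (a < n)%nat /\ (b < n)%nat /\ a <> b.
Proof. intros [Hd [Hb _]] [H|H]; auto. Qed.

Lemma bidir_sym_wf n G a b : wf_graph n G -> bidir G a b -> bidir G b a.
Proof. intros [_ [_ H]]. auto. Qed.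

Lemma dir_no_arrowhead_back n G a b :
  bow_free_acyclic n G -> dir G a b -> ~ arrowhead_at G b a.
Proof.
  intros [Hwf [Hac Hbf]] Hab [Hba|Hba].
  - apply (Hac a). apply t_trans with b; apply t_step; auto.
  - apply (Hbf a b); auto. eapply bidir_sym_wf; eauto.
Qed.

Lemma arrowhead_one_way_dir n G a b :
  wf_graph n G -> arrowhead_at G a b -> ~ arrowhead_at G b a -> dir G a b.
Proof. intros Hwf [H|H] H'; auto. exfalso. apply H'. right. eapply bidir_sym_wf; eauto. Qed.

Lemma arrowhead_both_ways_bidir n G a b :
  bow_free_acyclic n G -> arrowhead_at G a b -> arrowhead_at G b a -> bidir G a b.
Proof.
  intros Hg [H|H] H'; auto. exfalso. exact (dir_no_arrowhead_back n G a b Hg H H').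
Qed.

Lemma skel_arrowhead n G a b :
  wf_graph n G -> skel G a b <-> arrowhead_at G a b \/ arrowhead_at G b a.
Proof.
  intros Hwf. unfold skel, arrowhead_at. split.
  - intros [H|[H|H]]; auto.
  - intros [[H|H]|[H|H]]; auto. right. right. eapply bidir_sym_wf; eauto.
Qed.

Lemma acyclic_subgraph G G' :
  (forall i j, dir G' i j -> dir G i j) -> acyclic G -> acyclic G'.
Proof.
  intros Hsub Hac i Hi. apply (Hac i).
  assert (K : forall a b, clos_trans nat (dir G') a b -> clos_trans nat (dir G) a b).
  { intros a b H. induction H as [a b H|a b c _ IH1 _ IH2].
    - apply t_step. auto.
    - apply t_trans with b; auto. }
  auto.
Qed.

(* A directed cycle cannot pass through a node that no directed edge enters. *)
Lemma acyclic_add_edges_from G G' z :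
  (forall i, ~ dir G' i z) -> (forall i j, dir G' i j -> dir G i j \/ i = z) ->
  acyclic G -> acyclic G'.
Proof.
  intros Hz Hsub Hac.
  assert (K : forall a b, clos_trans nat (dir G') a b ->
                b <> z /\ (a = z \/ clos_trans nat (dir G) a b)).
  { intros a b H. induction H as [a b H|a y b _ [Hy IH1] _ [Hb IH2]].
    - split; [intros ->; apply (Hz a H)|].
      destruct (Hsub a b H); auto. right. apply t_step; auto.
    - split; auto. destruct IH2 as [->|IH2]; [congruence|].
      destruct IH1 as [->|IH1]; auto. right. apply t_trans with y; auto. }
  intros i H. destruct (K i i H) as [Hn [Hi|Hi]]; [congruence|]. apply (Hac i Hi).
Qed.

Definition dir_to_bidir (G : mixed_graph) (u x : nat) : mixed_graph :=
  MixedGraph (fun i j => dir G i j /\ ~ (i = u /\ j = x))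
             (fun i j => bidir G i j \/ (i = u /\ j = x) \/ (i = x /\ j = u)).

Definition bidir_to_dir (G : mixed_graph) (u x : nat) : mixed_graph :=
  MixedGraph (fun i j => dir G i j \/ (i = u /\ j = x))
             (fun i j => bidir G i j /\ ~ (i = u /\ j = x) /\ ~ (i = x /\ j = u)).

Definition reverse_dir (G : mixed_graph) (u x : nat) : mixed_graph :=
  MixedGraph (fun i j => (dir G i j /\ ~ (i = u /\ j = x)) \/ (i = x /\ j = u))
             (bidir G).

Lemma bow_free_acyclic_dir_to_bidir n G u x :
  bow_free_acyclic n G -> dir G u x -> bow_free_acyclic n (dir_to_bidir G u x).
Proof.
  intros Hg Hd. pose proof Hg as [[W1 [W2 W3]] [Hac Hbf]].
  destruct (W1 u x Hd) as [Hu [Hx Hux]].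
  assert (Hxu : ~ arrowhead_at G x u) by exact (dir_no_arrowhead_back n G u x Hg Hd).
  split; [split; [|split]|split]; simpl.
  - intros i j [H _]. auto.
  - intros i j [H|[[-> ->]|[-> ->]]]; auto.
  - intros i j [H|[[-> ->]|[-> ->]]]; auto.
  - apply (acyclic_subgraph G); auto. intros i j [H _]. auto.
  - intros i j Hij [Hb|[[-> ->]|[-> ->]]]; simpl in Hij.
    + apply (Hbf i j); auto. destruct Hij as [[H _]|[H _]]; auto.
    + destruct Hij as [[_ H]|[H _]]; [tauto|]. apply Hxu. left. auto.
    + destruct Hij as [[H _]|[_ H]]; [|tauto]. apply Hxu. left. auto.
Qed.

Lemma bow_free_acyclic_bidir_to_dir n G u x :
  bow_free_acyclic n G -> bidir G u x -> (forall y, arrowhead_at G y u -> y = x) ->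
  bow_free_acyclic n (bidir_to_dir G u x).
Proof.
  intros Hg Hb Hh. pose proof Hg as [[W1 [W2 W3]] [Hac Hbf]].
  destruct (W2 u x Hb) as [Hu [Hx Hux]].
  assert (Hxu : ~ dir G x u)
    by (intros H; apply (dir_no_arrowhead_back n G x u Hg H); right; auto).
  split; [split; [|split]|split]; simpl.
  - intros i j [H|[-> ->]]; auto.
  - intros i j [H _]. auto.
  - intros i j [H [H1 H2]]. repeat split; auto; intros [-> ->]; tauto.
  - apply (acyclic_add_edges_from G _ u); simpl; auto.
    + intros i [H|[_ H]]; [|congruence].
      assert (i = x) by (apply Hh; left; auto). subst. auto.
    + intros i j [H|[-> _]]; auto.
  - intros i j [[H|[-> ->]]|[H|[-> ->]]] [Hb' [H1 H2]]; try tauto; apply (Hbf i j); auto.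
Qed.

Lemma bow_free_acyclic_reverse_dir n G u x :
  bow_free_acyclic n G -> dir G u x -> (forall y, ~ arrowhead_at G y u) ->
  (forall y, arrowhead_at G y x -> y = u) -> bow_free_acyclic n (reverse_dir G u x).
Proof.
  intros Hg Hd Hn Hh. pose proof Hg as [[W1 [W2 W3]] [Hac Hbf]].
  destruct (W1 u x Hd) as [Hu [Hx Hux]].
  split; [split; [|split]|split]; simpl; auto.
  - intros i j [[H _]|[-> ->]]; auto.
  - apply (acyclic_add_edges_from G _ x); simpl; auto.
    + intros i [[H H']|[_ H]]; [|congruence]. apply H'. split; auto. apply Hh. left. auto.
    + intros i j [[H _]|[-> _]]; auto.
  - intros i j [[[H _]|[-> ->]]|[[H _]|[-> ->]]] Hb.
    + apply (Hbf i j); auto.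
    + apply (Hn x). right. auto.
    + apply (Hbf i j); auto.
    + apply (Hn x). right. eapply bidir_sym_wf; eauto. split; auto.
Qed.

Lemma arrowhead_dir_to_bidir G u x a b :
  dir G u x ->
  arrowhead_at (dir_to_bidir G u x) a b <-> arrowhead_at G a b \/ (a = x /\ b = u).
Proof.
  intros Hd. unfold arrowhead_at. simpl. split.
  - intros [[H _]|[H|[[-> ->]|[-> ->]]]]; auto.
  - intros [[H|H]|[-> ->]]; auto.
    destruct (classic (a = u /\ b = x)) as [[-> ->]|Hne]; auto.
Qed.

Lemma arrowhead_bidir_to_dir n G u x a b :
  bow_free_acyclic n G -> bidir G u x ->
  arrowhead_at (bidir_to_dir G u x) a b <-> arrowhead_at G a b /\ ~ (a = x /\ b = u).
Proof.
  intros Hg Hb. pose proof Hg as [[_ [W2 _]] _].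
  destruct (W2 u x Hb) as [_ [_ Hux]].
  assert (Hxu : ~ dir G x u)
    by (intros H; apply (dir_no_arrowhead_back n G x u Hg H); right; auto).
  unfold arrowhead_at. simpl. split.
  - intros [[H|[-> ->]]|[H [H1 H2]]].
    + split; [left; auto|]. intros [-> ->]. auto.
    + split; [right; auto|]. intros [_ E]. auto.
    + split; [right|]; auto.
  - intros [[H|H] H']; auto.
    destruct (classic (a = u /\ b = x)) as [[-> ->]|Hne]; auto.
Qed.

Lemma arrowhead_reverse_dir n G u x a b :
  bow_free_acyclic n G -> dir G u x ->
  arrowhead_at (reverse_dir G u x) a b <->
  (arrowhead_at G a b /\ ~ (a = u /\ b = x)) \/ (a = x /\ b = u).
Proof.
  intros Hg Hd. pose proof Hg as [_ [_ Hbf]].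
  unfold arrowhead_at. simpl. split.
  - intros [[[H H']|H]|H]; auto.
    left. split; auto. intros [-> ->]. apply (Hbf u x); auto.
  - intros [[[H|H] H']|H]; auto.
Qed.

Lemma idm_pair_eq0 i j u x : ~ (i = u /\ j = x) -> (idm i u * idm j x = 0).
Proof. intros H. unfold idm. destruct (Nat.eqb_spec i u), (Nat.eqb_spec j x); subst; try tauto; ring. Qed.

Lemma pos_def_diag n W u : pos_def n W -> (u < n)%nat -> 0 < W u u.
Proof.
  intros [_ Hpos] Hu.
  replace (W u u) with (rsum n (fun i => rsum n (fun j => idm u i * W i j * idm u j))).
  - apply Hpos. exists u. rewrite idm_eq. split; [auto|lra].
  - transitivity (rsum n (fun i => idm u i * W i u)).
    + apply rsum_ext. intros i Hi. rewrite <- (rsum_idm_r n u (fun j => idm u i * W i j)) by auto.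
      apply rsum_ext. intros. rewrite (idm_sym u k). ring.
    + apply (rsum_idm_l n u (fun i => W i u)). auto.
Qed.

Lemma in_model_dir_to_bidir n G u x S :
  bow_free_acyclic n G -> dir G u x -> (forall y, ~ arrowhead_at G y u) ->
  in_model n G S -> in_model n (dir_to_bidir G u x) S.
Proof.
  intros Hg Hd Hn (L & W & Minv & HL & HM1 & HM2 & HW & HWs & HS).
  pose proof Hg as [[W1 _] _]. destruct (W1 u x Hd) as [Hu [Hx Hux]].
  set (c := L u x).
  assert (Liu : forall i, (i < n)%nat -> L i u = 0).
  { intros i Hi. apply HL; auto. intros H. apply (Hn i). left. auto. }
  assert (Wiu : forall i, (i < n)%nat -> i <> u -> W i u = 0).
  { intros i Hi Hiu. apply HWs; auto. intros H. apply (Hn i). right. auto. }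
  assert (Wui : forall i, (i < n)%nat -> i <> u -> W u i = 0).
  { intros i Hi Hiu. rewrite (proj1 HW) by auto. auto. }
  apply (in_model_congruence n _ S L W Minv (idm_block u x 0 c 0 0) (idm_block u x 0 (- c) 0 0));
    auto.
  - apply idm_block_inverses; auto; ring.
  - intros i j Hi Hj Hij. simpl in Hij. rewrite mxmul_idm_block by auto. unfold ImL.
    rewrite (Liu i Hi).
    destruct (classic (i = u /\ j = x)) as [[-> ->]|Hne].
    + rewrite !idm_eq, (idm_neq x u) by auto. unfold c. ring.
    + rewrite (HL i j) by tauto.
      replace (c * (idm i u - 0) * idm j x) with (c * (idm i u * idm j x)) by ring.
      rewrite idm_pair_eq0 by auto. ring.
  - intros i j Hi Hj Hij Hb. simpl in Hb. rewrite quad_idm_block by auto. cbv zeta.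
    rewrite !mxmul_idm_block by auto.
    assert (Wij : W i j = 0) by (apply HWs; auto).
    destruct (Nat.eq_dec j x) as [->|Hjx].
    + assert (i <> u) by (intros ->; apply Hb; auto).
      rewrite (idm_neq i x), (idm_neq x u), idm_eq, Wiu, Wij by auto. ring.
    + rewrite (idm_neq j x) by auto. destruct (Nat.eq_dec i x) as [->|Hix].
      * assert (j <> u) by (intros ->; apply Hb; auto). rewrite Wui, Wij by auto. ring.
      * rewrite (idm_neq i x), Wij by auto. ring.
Qed.

Lemma in_model_bidir_to_dir n G u x S :
  bow_free_acyclic n G -> bidir G u x -> (forall y, arrowhead_at G y u -> y = x) ->
  in_model n G S -> in_model n (bidir_to_dir G u x) S.
Proof.
  intros Hg Hb Hh (L & W & Minv & HL & HM1 & HM2 & HW & HWs & HS).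
  pose proof Hg as [[_ [W2 _]] [_ Hbf]]. destruct (W2 u x Hb) as [Hu [Hx Hux]].
  assert (Hxu : ~ dir G x u)
    by (intros H; apply (dir_no_arrowhead_back n G x u Hg H); right; auto).
  pose proof (pos_def_diag n W u HW Hu) as Wuu.
  (* regressing the error of x on that of u removes the covariance W x u *)
  set (c := (W x u / W u u)).
  assert (Liu : forall i, (i < n)%nat -> L i u = 0).
  { intros i Hi. apply HL; auto. intros H. assert (i = x) by (apply Hh; left; auto). subst. auto. }
  assert (Wiu : forall i, (i < n)%nat -> i <> u -> i <> x -> W i u = 0).
  { intros i Hi Hiu Hix. apply HWs; auto. intros H. apply Hix, Hh. right. auto. }
  assert (Wui : forall i, (i < n)%nat -> i <> u -> i <> x -> W u i = 0).
  { intros i Hi Hiu Hix. rewrite (proj1 HW) by auto. auto. }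
  apply (in_model_congruence n _ S L W Minv (idm_block u x 0 (- c) 0 0) (idm_block u x 0 c 0 0));
    auto.
  - apply idm_block_inverses; auto; ring.
  - intros i j Hi Hj Hij. simpl in Hij. rewrite mxmul_idm_block by auto. unfold ImL.
    rewrite (Liu i Hi), (HL i j) by tauto.
    replace (- c * (idm i u - 0) * idm j x) with (- c * (idm i u * idm j x)) by ring.
    rewrite idm_pair_eq0 by tauto. ring.
  - intros i j Hi Hj Hij Hb'. simpl in Hb'. rewrite quad_idm_block by auto. cbv zeta.
    rewrite !mxmul_idm_block by auto.
    destruct (classic (i = u /\ j = x)) as [[-> ->]|Hne1].
    { rewrite (idm_neq u x), (idm_neq x u), !idm_eq by auto. unfold c.
      rewrite (proj1 HW u x) by auto. field. lra. }
    destruct (classic (i = x /\ j = u)) as [[-> ->]|Hne2].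
    { rewrite (idm_neq u x), (idm_neq x u), !idm_eq by auto. unfold c. field. lra. }
    assert (Wij : W i j = 0) by (apply HWs; tauto).
    destruct (Nat.eq_dec j x) as [->|Hjx].
    + assert (i <> u) by (intros ->; tauto).
      rewrite (idm_neq i x), idm_eq, Wiu, Wij by auto. ring.
    + rewrite (idm_neq j x) by auto. destruct (Nat.eq_dec i x) as [->|Hix].
      * assert (j <> u) by (intros ->; tauto). rewrite Wui, Wij by auto. ring.
      * rewrite (idm_neq i x), Wij by auto. ring.
Qed.

Lemma in_model_reverse_dir n G u x S :
  bow_free_acyclic n G -> dir G u x -> (forall y, ~ arrowhead_at G y u) ->
  (forall y, arrowhead_at G y x -> y = u) ->
  in_model n G S -> in_model n (reverse_dir G u x) S.
Proof.
  intros Hg Hd Hn Hh (L & W & Minv & HL & HM1 & HM2 & HW & HWs & HS).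
  pose proof Hg as [[W1 _] [_ Hbf]]. destruct (W1 u x Hd) as [Hu [Hx Hux]].
  pose proof (pos_def_diag n W u HW Hu) as Wuu.
  pose proof (pos_def_diag n W x HW Hx) as Wxx.
  set (l := L u x). set (a := W u u). set (b := W x x).
  assert (Hden : (l * l * a + b <> 0)) by (unfold a, b; nra).
  (* the regression coefficient of u on x in the 2-node model u -> x *)
  set (m := (l * a / (l * l * a + b))).
  assert (Liu : forall i, (i < n)%nat -> L i u = 0).
  { intros i Hi. apply HL; auto. intros H. apply (Hn i). left. auto. }
  assert (Lix : forall i, (i < n)%nat -> i <> u -> L i x = 0).
  { intros i Hi Hiu. apply HL; auto. intros H. apply Hiu, Hh. left. auto. }
  assert (Wiu : forall i, (i < n)%nat -> i <> u -> W i u = 0).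
  { intros i Hi Hiu. apply HWs; auto. intros H. apply (Hn i). right. auto. }
  assert (Wui : forall i, (i < n)%nat -> i <> u -> W u i = 0).
  { intros i Hi Hiu. rewrite (proj1 HW) by auto. auto. }
  assert (Wix : forall i, (i < n)%nat -> i <> x -> W i x = 0).
  { intros i Hi Hix. apply HWs; auto. intros H.
    assert (i = u) by (apply Hh; right; auto). subst. apply (Hbf u x); auto. }
  assert (Wxi : forall i, (i < n)%nat -> i <> x -> W x i = 0).
  { intros i Hi Hix. rewrite (proj1 HW) by auto. auto. }
  apply (in_model_congruence n _ S L W Minv (idm_block u x (- (l * m)) l (- m) 0)
           (idm_block u x 0 (- l) m (- (l * m)))); auto.
  - apply idm_block_inverses; auto; ring.
  - intros i j Hi Hj Hij. simpl in Hij. rewrite mxmul_idm_block by auto. unfold ImL.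
    rewrite (Liu i Hi).
    destruct (classic (i = u /\ j = x)) as [[-> ->]|Hne1].
    { rewrite (idm_neq u x), (idm_neq x u), !idm_eq by auto. fold l. ring. }
    rewrite (HL i j) by tauto.
    destruct (Nat.eq_dec j u) as [->|Hju].
    + rewrite (idm_neq u x), idm_eq by auto.
      destruct (Nat.eq_dec i u) as [->|Hiu].
      * rewrite (idm_neq u x), idm_eq by auto. fold l. ring.
      * rewrite (idm_neq i u), (Lix i), (idm_neq i x) by (auto; intros ->; tauto). ring.
    + rewrite (idm_neq j u) by auto.
      destruct (Nat.eq_dec j x) as [->|Hjx].
      * rewrite (idm_neq i u) by (intros ->; tauto). ring.
      * rewrite (idm_neq j x) by auto. ring.
  - intros i j Hi Hj Hij Hb. simpl in Hb. rewrite quad_idm_block by auto. cbv zeta.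
    rewrite !mxmul_idm_block by auto.
    destruct (classic (i = u /\ j = x)) as [[-> ->]|Hne1].
    { rewrite (idm_neq u x), (idm_neq x u), !idm_eq, (Wui x), (Wxi u) by auto.
      fold a b. unfold m. field. auto. }
    destruct (classic (i = x /\ j = u)) as [[-> ->]|Hne2].
    { rewrite (idm_neq u x), (idm_neq x u), !idm_eq, (Wui x), (Wxi u) by auto.
      fold a b. unfold m. field. auto. }
    assert (Wij : W i j = 0) by (apply HWs; auto).
    destruct (Nat.eq_dec j u) as [->|Hju].
    + assert (i <> x) by (intros ->; tauto).
      rewrite (idm_neq i u), (idm_neq i x), (idm_neq u x), idm_eq, (Wix i), Wij by auto. ring.
    + destruct (Nat.eq_dec j x) as [->|Hjx].
      * assert (i <> u) by (intros ->; tauto).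
        rewrite (idm_neq i u), (idm_neq i x), (idm_neq x u), idm_eq, (Wiu i), Wij by auto. ring.
      * rewrite (idm_neq j u), (idm_neq j x), (Wui j), (Wxi j), Wij by auto. ring.
Qed.

Local Open Scope nat_scope.

Definition indicator (P : Prop) : nat := if excluded_middle_informative P then 1 else 0.

Fixpoint nat_sum (k : nat) (f : nat -> nat) : nat :=
  match k with O => O | S k' => nat_sum k' f + f k' end.

Lemma nat_sum_le n f g : (forall k, k < n -> f k <= g k) -> nat_sum n f <= nat_sum n g.
Proof.
  induction n as [|n IH]; simpl; intros H; auto.
  specialize (IH ltac:(intros; apply H; lia)). specialize (H n ltac:(lia)). lia.
Qed.

Lemma nat_sum_lt n f g :
  (forall k, k < n -> f k <= g k) -> (exists k, k < n /\ f k < g k) -> nat_sum n f < nat_sum n g.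
Proof.
  intros Hle [k [Hk Hlt]]. induction n as [|n IH]; simpl; [lia|].
  destruct (Nat.eq_dec k n) as [->|Hkn].
  - pose proof (nat_sum_le n f g ltac:(intros; apply Hle; lia)). lia.
  - specialize (IH ltac:(intros; apply Hle; lia) ltac:(lia)). specialize (Hle n ltac:(lia)). lia.
Qed.

Lemma indicator_le (P Q : Prop) : (P -> Q) -> indicator P <= indicator Q.
Proof.
  unfold indicator. intros H.
  destruct (excluded_middle_informative P), (excluded_middle_informative Q); tauto || lia.
Qed.

Lemma indicator_lt (P Q : Prop) : ~ P -> Q -> indicator P < indicator Q.
Proof.
  unfold indicator. intros H1 H2.
  destruct (excluded_middle_informative P), (excluded_middle_informative Q); tauto || lia.
Qed.

Definition mismatch (G1 G2 : mixed_graph) (y u : nat) : Prop :=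
  ~ (arrowhead_at G1 y u <-> arrowhead_at G2 y u).

Definition mismatch_count (n : nat) (G1 G2 : mixed_graph) : nat :=
  nat_sum n (fun u => nat_sum n (fun y => indicator (mismatch G1 G2 y u))).

Definition ancestor_count (n : nat) (G : mixed_graph) (u : nat) : nat :=
  nat_sum n (fun z => indicator (clos_trans nat (dir G) z u)).

Definition same_skeleton (G1 G2 : mixed_graph) : Prop := forall i j, skel G1 i j <-> skel G2 i j.

(* For bow-free graphs with a common skeleton this says that G1 and G2 have the same colliders. *)
Definition colliders_agree (G1 G2 : mixed_graph) : Prop :=
  (forall a b c, a <> b -> arrowhead_at G1 a c -> arrowhead_at G1 b c -> arrowhead_at G2 a c) /\
  (forall a b c, a <> b -> arrowhead_at G2 a c -> arrowhead_at G2 b c -> arrowhead_at G1 a c).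

Definition at_most_one_arrowhead (G : mixed_graph) (z : nat) : Prop :=
  forall a b, arrowhead_at G a z -> arrowhead_at G b z -> a = b.

Lemma mismatch_count_lt n G1 G1' G2 :
  (forall y u, y < n -> u < n -> mismatch G1' G2 y u -> mismatch G1 G2 y u) ->
  (exists y u, y < n /\ u < n /\ mismatch G1 G2 y u /\ ~ mismatch G1' G2 y u) ->
  mismatch_count n G1' G2 < mismatch_count n G1 G2.
Proof.
  intros Hsub (y & u & Hy & Hu & H1 & H2). unfold mismatch_count.
  apply nat_sum_lt.
  - intros k Hk. apply nat_sum_le. intros. apply indicator_le. auto.
  - exists u. split; auto. apply nat_sum_lt.
    + intros. apply indicator_le. auto.
    + exists y. split; auto. apply indicator_lt; auto.
Qed.

Lemma ancestor_count_lt n G w u :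
  bow_free_acyclic n G -> dir G w u -> ancestor_count n G w < ancestor_count n G u.
Proof.
  intros [[Hd _] [Hac _]] Hwu. destruct (Hd w u Hwu) as [Hw _].
  unfold ancestor_count. apply nat_sum_lt.
  - intros k Hk. apply indicator_le. intros H. apply t_trans with w; auto. apply t_step. auto.
  - exists w. split; auto. apply indicator_lt; [apply Hac|apply t_step; auto].
Qed.

Lemma colliders_agree_local G1 G1' G2 :
  colliders_agree G1 G2 ->
  (forall z, (forall y, arrowhead_at G1' y z <-> arrowhead_at G1 y z) \/
             (at_most_one_arrowhead G1' z /\ at_most_one_arrowhead G1 z)) ->
  colliders_agree G1' G2.
Proof.
  intros [P1 P2] Hz. split.
  - intros a b c Hab Ha Hb. destruct (Hz c) as [E|[E1 _]].
    + apply (P1 a b c Hab); apply E; auto.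
    + exfalso. apply Hab, E1; auto.
  - intros a b c Hab Ha Hb.
    pose proof (P2 a b c Hab Ha Hb). pose proof (P2 b a c (not_eq_sym Hab) Hb Ha).
    destruct (Hz c) as [E|[_ E2]].
    + apply E. auto.
    + exfalso. apply Hab, E2; auto.
Qed.

Lemma same_skeleton_local n G1 G1' G2 :
  wf_graph n G1 -> wf_graph n G1' -> same_skeleton G1 G2 ->
  (forall a b, arrowhead_at G1' a b \/ arrowhead_at G1' b a <->
               arrowhead_at G1 a b \/ arrowhead_at G1 b a) ->
  same_skeleton G1' G2.
Proof.
  intros W1 W1' Hs H i j.
  rewrite <- (Hs i j), (skel_arrowhead n G1' i j W1'), (skel_arrowhead n G1 i j W1). apply H.
Qed.

Lemma in_model_no_mismatch n G1 G2 S :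
  bow_free_acyclic n G1 -> bow_free_acyclic n G2 ->
  (forall y u, y < n -> u < n -> ~ mismatch G1 G2 y u) ->
  in_model n G1 S -> in_model n G2 S.
Proof.
  intros H1 H2 Hmm (L & W & Minv & HL & HM1 & HM2 & HW & HWs & HS).
  assert (E : forall a b, a < n -> b < n -> arrowhead_at G1 a b <-> arrowhead_at G2 a b).
  { intros a b Ha Hb. specialize (Hmm a b Ha Hb). unfold mismatch in Hmm. tauto. }
  exists L, W, Minv. split; [|split; [auto|split; [auto|split; [auto|split; [|auto]]]]].
  - intros i j Hi Hj Hd. apply HL; auto. intros Hd1. apply Hd.
    apply (arrowhead_one_way_dir n G2 i j (proj1 H2)).
    + apply E; auto. left. auto.
    + rewrite <- E by auto. apply (dir_no_arrowhead_back n G1 i j H1 Hd1).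
  - intros i j Hi Hj Hij Hb. apply HWs; auto. intros Hb1. apply Hb.
    apply (arrowhead_both_ways_bidir n G2 i j H2); apply E; auto; right; auto.
    apply (bidir_sym_wf n G1); auto. apply H1.
Qed.

Definition closer_to (n : nat) (G2 G1 G1' : mixed_graph) : Prop :=
  bow_free_acyclic n G1' /\ same_skeleton G1' G2 /\ colliders_agree G1' G2 /\
  mismatch_count n G1' G2 < mismatch_count n G1 G2 /\
  (forall S, in_model n G1 S -> in_model n G1' S).

Lemma closer_dir_to_bidir n G1 G2 u x :
  bow_free_acyclic n G1 -> same_skeleton G1 G2 -> colliders_agree G1 G2 ->
  dir G1 u x -> (forall y, ~ arrowhead_at G1 y u) -> arrowhead_at G2 x u ->
  closer_to n G2 G1 (dir_to_bidir G1 u x).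
Proof.
  intros Hg Hs Hc Hd Hn H2.
  pose proof (bow_free_acyclic_dir_to_bidir n G1 u x Hg Hd) as Hg'.
  pose proof Hg as [[W1 _] _]. destruct (W1 u x Hd) as [Hu [Hx Hux]].
  pose proof (fun a b => arrowhead_dir_to_bidir G1 u x a b Hd) as E.
  split; [auto|split; [|split; [|split]]].
  - apply (same_skeleton_local n G1); [apply Hg|apply Hg'|auto|].
    intros a b. rewrite (E a b), (E b a). split.
    + intros [[H|[-> ->]]|[H|[-> ->]]]; auto; [right|left]; left; auto.
    + intros [H|H]; auto.
  - apply (colliders_agree_local G1); auto. intros z.
    destruct (Nat.eq_dec z u) as [->|Hz].
    + right. split.
      * intros a b Ha Hb. apply E in Ha, Hb.
        destruct Ha as [Ha|[-> _]]; [exfalso; eapply Hn; eauto|].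
        destruct Hb as [Hb|[-> _]]; [exfalso; eapply Hn; eauto|auto].
      * intros a b Ha. exfalso. eapply Hn; eauto.
    + left. intros y. rewrite E. split; [intros [H|[_ H]]; [auto|congruence]|auto].
  - apply mismatch_count_lt.
    + intros y c _ _. unfold mismatch. rewrite E.
      destruct (classic (y = x /\ c = u)) as [[-> ->]|Hne]; [tauto|].
      intros H H'. apply H. split; [intros [H0|H0]; [apply H'; auto|tauto]|].
      intros. left. apply H'. auto.
    + exists x, u. repeat split; auto.
      * intros H. apply (Hn x), H. auto.
      * intros H. apply H. rewrite E. split; auto.
  - intros S. apply in_model_dir_to_bidir; auto.
Qed.

Lemma closer_bidir_to_dir n G1 G2 u x :
  bow_free_acyclic n G1 -> same_skeleton G1 G2 -> colliders_agree G1 G2 ->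
  bidir G1 u x -> (forall y, arrowhead_at G1 y u -> y = x) -> ~ arrowhead_at G2 x u ->
  closer_to n G2 G1 (bidir_to_dir G1 u x).
Proof.
  intros Hg Hs Hc Hb Hh H2.
  pose proof (bow_free_acyclic_bidir_to_dir n G1 u x Hg Hb Hh) as Hg'.
  pose proof Hg as [[_ [W2 _]] _]. destruct (W2 u x Hb) as [Hu [Hx Hux]].
  assert (Axu : arrowhead_at G1 x u) by (right; eapply bidir_sym_wf; eauto; apply Hg).
  pose proof (fun a b => arrowhead_bidir_to_dir n G1 u x a b Hg Hb) as E.
  split; [auto|split; [|split; [|split]]].
  - apply (same_skeleton_local n G1); [apply Hg|apply Hg'|auto|].
    intros a b. rewrite (E a b), (E b a). split.
    + intros [[H _]|[H _]]; auto.
    + intros [H|H].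
      * destruct (classic (a = x /\ b = u)) as [[-> ->]|Hne].
        -- right. split; [right; auto|intros [Heq _]; auto].
        -- left. auto.
      * destruct (classic (b = x /\ a = u)) as [[-> ->]|Hne].
        -- left. split; [right; auto|intros [Heq _]; auto].
        -- right. auto.
  - apply (colliders_agree_local G1); auto. intros z.
    destruct (Nat.eq_dec z u) as [->|Hz].
    + right. split.
      * intros a b Ha Hb1. apply E in Ha. destruct Ha as [Ha Ha']. exfalso. apply Ha'. auto.
      * intros a b Ha Hb1. rewrite (Hh a Ha), (Hh b Hb1). auto.
    + left. intros y. rewrite E. split; [intros [H _]; auto|].
      intros H. split; auto. intros [_ ?]. congruence.
  - apply mismatch_count_lt.
    + intros y c _ _. unfold mismatch. rewrite E.
      destruct (classic (y = x /\ c = u)) as [[-> ->]|Hne]; [tauto|].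
      intros H H'. apply H. split; [intros [H0 _]; apply H'; auto|].
      intros H0. split; auto. apply H'. auto.
    + exists x, u. repeat split; auto.
      * intros H. apply H2, H. auto.
      * intros H. apply H. rewrite E. split; [intros [_ H0]; exfalso; auto|tauto].
  - intros S. apply in_model_bidir_to_dir; auto.
Qed.

Lemma closer_reverse_dir n G1 G2 u x :
  bow_free_acyclic n G1 -> same_skeleton G1 G2 -> colliders_agree G1 G2 ->
  dir G1 u x -> (forall y, ~ arrowhead_at G1 y u) -> (forall y, arrowhead_at G1 y x -> y = u) ->
  arrowhead_at G2 x u -> ~ arrowhead_at G2 u x ->
  closer_to n G2 G1 (reverse_dir G1 u x).
Proof.
  intros Hg Hs Hc Hd Hn Hh H2 H2'.
  pose proof (bow_free_acyclic_reverse_dir n G1 u x Hg Hd Hn Hh) as Hg'.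
  pose proof Hg as [[W1 _] _]. destruct (W1 u x Hd) as [Hu [Hx Hux]].
  pose proof (fun a b => arrowhead_reverse_dir n G1 u x a b Hg Hd) as E.
  split; [auto|split; [|split; [|split]]].
  - apply (same_skeleton_local n G1); [apply Hg|apply Hg'|auto|].
    intros a b. rewrite (E a b), (E b a). split.
    + intros [[[H _]|[-> ->]]|[[H _]|[-> ->]]]; auto; [right|left]; left; auto.
    + intros [H|H].
      * destruct (classic (a = u /\ b = x)) as [[-> ->]|Hne]; [right; right|left; left]; auto.
      * destruct (classic (b = u /\ a = x)) as [[-> ->]|Hne]; [left; right|right; left]; auto.
  - apply (colliders_agree_local G1); auto. intros z.
    destruct (Nat.eq_dec z u) as [->|Hzu]; [|destruct (Nat.eq_dec z x) as [->|Hzx]].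
    + right. split.
      * intros a b Ha Hb. apply E in Ha, Hb.
        destruct Ha as [[Ha _]|[-> _]]; [exfalso; eapply Hn; eauto|].
        destruct Hb as [[Hb _]|[-> _]]; [exfalso; eapply Hn; eauto|auto].
      * intros a b Ha. exfalso. eapply Hn; eauto.
    + right. split.
      * intros a b Ha Hb. apply E in Ha. exfalso.
        destruct Ha as [[Ha Ha']|[_ Ha]]; [apply Ha'; split; auto|congruence].
      * intros a b Ha Hb. rewrite (Hh a Ha), (Hh b Hb). auto.
    + left. intros y. rewrite E. split.
      * intros [[H _]|[_ H]]; [auto|congruence].
      * intros H. left. split; auto. intros [_ ?]. congruence.
  - apply mismatch_count_lt.
    + intros y c _ _. unfold mismatch. rewrite E.
      destruct (classic (y = x /\ c = u)) as [[-> ->]|Hne]; [tauto|].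
      destruct (classic (y = u /\ c = x)) as [[-> ->]|Hne']; [tauto|].
      intros H H'. apply H. split.
      * intros [[H0 _]|H0]; [apply H'; auto|tauto].
      * intros H0. left. split; [apply H'; auto|auto].
    + exists x, u. repeat split; auto.
      * intros H. apply (Hn x), H. auto.
      * intros H. apply H. rewrite E. split; auto.
  - intros S. apply in_model_reverse_dir; auto.
Qed.

(* A mismatched arrowhead into u is traced back along the directed edges of G1 (the
   ancestor count drops) until one of the three moves becomes applicable. *)
Lemma exists_closer n G1 G2 u y :
  bow_free_acyclic n G1 -> bow_free_acyclic n G2 -> same_skeleton G1 G2 ->
  colliders_agree G1 G2 -> mismatch G1 G2 y u -> exists G1', closer_to n G2 G1 G1'.
Proof.
  intros Hg1 Hg2 Hs Hc. pose proof Hc as [P1 P2].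
  remember (ancestor_count n G1 u) as k eqn:Hk.
  revert u y Hk. induction k as [k IH] using lt_wf_ind. intros u y Hk Hmm.
  destruct (classic (exists w, arrowhead_at G1 w u)) as [[w Hw]|Hnone].
  - assert (Hh : forall z, arrowhead_at G1 z u -> z = w).
    { intros z Hz. apply NNPP. intros Hzw. apply Hmm.
      assert (A2w : arrowhead_at G2 w u) by (apply (P1 w z u); auto).
      split.
      - intros Hy1. destruct (Nat.eq_dec y w) as [->|Hyw]; auto. apply (P1 y w u Hyw Hy1 Hw).
      - intros Hy2. destruct (Nat.eq_dec y w) as [->|Hyw]; auto. apply (P2 y w u Hyw Hy2 A2w). }
    assert (Nw : ~ arrowhead_at G2 w u).
    { intros Hw2. apply Hmm. split; intros H.
      - rewrite (Hh y H). auto.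
      - destruct (Nat.eq_dec y w) as [->|Hyw]; auto. exact (P2 y w u Hyw H Hw2). }
    destruct (classic (arrowhead_at G1 u w)) as [Huw|Nuw].
    + exists (bidir_to_dir G1 u w). apply closer_bidir_to_dir; auto.
      apply (arrowhead_both_ways_bidir n G1 u w); auto.
    + assert (Hwu : dir G1 w u) by (apply (arrowhead_one_way_dir n G1 w u); auto; apply Hg1).
      assert (Sk : skel G2 w u) by (apply Hs, (skel_arrowhead n G1 w u); [apply Hg1|auto]).
      apply (skel_arrowhead n G2 w u) in Sk; [|apply Hg2].
      destruct Sk as [Sk|Sk]; [contradiction|].
      apply (IH (ancestor_count n G1 w)) with w u; auto.
      * subst k. apply ancestor_count_lt; auto.
      * intros H. apply Nuw, H. auto.
  - assert (Hn : forall z, ~ arrowhead_at G1 z u) by (intros z Hz; apply Hnone; exists z; auto).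
    assert (A2y : arrowhead_at G2 y u).
    { apply NNPP. intros H. apply Hmm. split; intros H'; [exfalso; eapply Hn; eauto|contradiction]. }
    assert (Sk : skel G1 y u) by (apply Hs, (skel_arrowhead n G2 y u); [apply Hg2|auto]).
    apply (skel_arrowhead n G1 y u) in Sk; [|apply Hg1].
    destruct Sk as [Sk|Sk]; [exfalso; eapply Hn; eauto|].
    assert (Hd : dir G1 u y) by (apply (arrowhead_one_way_dir n G1 u y); auto; apply Hg1).
    destruct (classic (arrowhead_at G2 u y)) as [H2|H2].
    + exists (dir_to_bidir G1 u y). apply closer_dir_to_bidir; auto.
    + exists (reverse_dir G1 u y). apply closer_reverse_dir; auto.
      intros z Hz. apply NNPP. intros Hzu. apply H2, (P1 u z y); auto.
Qed.

Lemma in_model_incl n G1 G2 S :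
  bow_free_acyclic n G1 -> bow_free_acyclic n G2 -> same_skeleton G1 G2 ->
  colliders_agree G1 G2 -> in_model n G1 S -> in_model n G2 S.
Proof.
  remember (mismatch_count n G1 G2) as k eqn:Hk.
  revert G1 Hk. induction k as [k IH] using lt_wf_ind. intros G1 Hk Hg1 Hg2 Hs Hc HS.
  destruct (classic (exists y u, y < n /\ u < n /\ mismatch G1 G2 y u))
    as [(y & u & _ & _ & Hmm)|Hnone].
  - destruct (exists_closer n G1 G2 u y Hg1 Hg2 Hs Hc Hmm) as (G1' & Hg' & Hs' & Hc' & Hlt & Hincl).
    apply (IH (mismatch_count n G1' G2)) with G1'; auto. lia.
  - apply (in_model_no_mismatch n G1 G2); auto.
    intros y u Hy Hu H. apply Hnone. exists y, u. auto.
Qed.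

Lemma collider_of_arrowheads n G a b c :
  wf_graph n G -> a <> b -> arrowhead_at G a c -> arrowhead_at G b c -> collider n G a c b.
Proof.
  intros Hwf Hab Ha Hb.
  destruct (arrowhead_at_range n G a c Hwf Ha) as (Han & Hcn & Hac).
  destruct (arrowhead_at_range n G b c Hwf Hb) as (Hbn & _ & Hbc).
  repeat split; auto.
  - apply (skel_arrowhead n G a c Hwf). auto.
  - apply (skel_arrowhead n G c b Hwf). auto.
Qed.

Lemma colliders_agree_of_collider_iff n G1 G2 :
  wf_graph n G1 -> wf_graph n G2 -> same_skeleton G1 G2 ->
  (forall v1 v2 v3, skel_path3 n G1 v1 v2 v3 ->
     (collider n G1 v1 v2 v3 <-> collider n G2 v1 v2 v3)) ->
  colliders_agree G1 G2.
Proof.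
  intros W1 W2 Hs Hcol. split; intros a b c Hab Ha Hb.
  - pose proof (collider_of_arrowheads n G1 a b c W1 Hab Ha Hb) as H1.
    apply (Hcol a c b (proj1 H1)) in H1. apply H1.
  - pose proof (collider_of_arrowheads n G2 a b c W2 Hab Ha Hb) as H2.
    assert (P : skel_path3 n G1 a c b).
    { destruct H2 as [(? & ? & ? & ? & ? & ? & ? & ?) _]. repeat split; auto; apply Hs; auto. }
    apply (Hcol a c b P) in H2. apply H2.
Qed.

Lemma alg_equivalent_of_same_model n G1 G2 :
  (forall S, in_model n G1 S -> in_model n G2 S) ->
  (forall S, in_model n G2 S -> in_model n G1 S) ->
  alg_equivalent n G1 G2.
Proof. intros H12 H21 S. split; intros H p Hp; apply H; auto. Qed.

Theorem proposition1 (n : nat) (G1 G2 : mixed_graph) :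
  wf_graph n G1 -> wf_graph n G2 ->
  acyclic G1 -> acyclic G2 ->
  bow_free G1 -> bow_free G2 ->
  (forall i j, skel G1 i j <-> skel G2 i j) ->
  (forall v1 v2 v3, skel_path3 n G1 v1 v2 v3 ->
     (collider n G1 v1 v2 v3 <-> collider n G2 v1 v2 v3)) ->
  alg_equivalent n G1 G2.
Proof.
  intros W1 W2 Ac1 Ac2 B1 B2 Hs Hcol.
  assert (Hg1 : bow_free_acyclic n G1) by exact (conj W1 (conj Ac1 B1)).
  assert (Hg2 : bow_free_acyclic n G2) by exact (conj W2 (conj Ac2 B2)).
  assert (Hc : colliders_agree G1 G2) by (apply colliders_agree_of_collider_iff with n; auto).
  apply alg_equivalent_of_same_model; intros S.
  - apply in_model_incl; auto.
  - apply in_model_incl; auto.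
    + intros i j. symmetry. apply Hs.
    + split; apply Hc.
Qed.
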